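(* For $n\ge 2$, the number of shallow $132$-avoiding centrosymmetric permutations in $S_n$ equals $\lceil (n+1)/2\rceil$.
   Context: For $\pi\in S_n$: $D(\pi)=\sum_{i}|\pi_i-i|$, $I(\pi)$ is the number of inversions, $T(\pi)=n-\mathrm{cyc}(\pi)$ with $\mathrm{cyc}$ the number of cycles in the disjoint cycle decomposition; $\pi$ is shallow if $I(\pi)+T(\pi)=D(\pi)$. A permutation avoids a pattern $\sigma$ if it has no subsequence order-isomorphic to $\sigma$. The reverse-complement $\pi^{rc}$ is defined by $\pi^{rc}_{n+1-i}=n+1-\pi_i$; $\pi$ is centrosymmetric if $\pi=\pi^{rc}$. *)

From mathcomp Require Import all_boot all_fingroup.
Set Implicit Arguments. Unset Strict Implicit. Unset Printing Implicit Defensive.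

(* Permutations of S_n are represented as s : {perm 'I_n}, acting on the
   0-based positions {0,...,n-1}; pi_i (1-based) corresponds to s (i-1) + 1. *)

Definition displacement n (s : {perm 'I_n}) : nat :=
  \sum_(i : 'I_n) (maxn (s i) i - minn (s i) i).

Definition inversions n (s : {perm 'I_n}) : nat :=
  #|[set p : 'I_n * 'I_n | (p.1 < p.2) && (s p.2 < s p.1)]|.

Definition ncycles n (s : {perm 'I_n}) : nat := #|porbits s|.

Definition transpositions n (s : {perm 'I_n}) : nat := n - ncycles s.

Definition shallow n (s : {perm 'I_n}) : bool :=
  inversions s + transpositions s == displacement s.

Definition avoids132 n (s : {perm 'I_n}) : bool :=
  ~~ [exists i : 'I_n, exists j : 'I_n, exists k : 'I_n,
        [&& i < j, j < k, s i < s k & s k < s j]].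

Definition centrosymmetric n (s : {perm 'I_n}) : bool :=
  [forall i : 'I_n, s (rev_ord i) == rev_ord (s i)].

From mathcomp Require Import all_boot all_fingroup zify.
Set Implicit Arguments. Unset Strict Implicit. Unset Printing Implicit Defensive.

(** For every permutation [I + T <= D] (Diaconis-Graham): swapping the largest
   non-fixed point [M] with its preimage lowers [I + T] by at most the drop of [D],
   and lowers the support, so induction applies.

   The permutations [rev_ends n k], which reverse the first [k] and the last [k]
   positions and fix the rest, are shallow, 132-avoiding and centrosymmetric for
   [k <= n/2].  Conversely, let [s] be centrosymmetric and 132-avoiding and let [k]
   be the first position [< n/2] that [s] does not reverse; then [s] maps the middle
   block [k <= i < n - k] onto itself.  If [s k = k], a first non-fixed point of the
   block would start a 132, so [s = rev_ends n k].  Otherwise, since [s] also avoids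
   213 (the reverse-complement of 132), swapping the values at [k] and [s^-1 k]
   lowers [D] by strictly more than it can lower [I + T], and Diaconis-Graham after
   the swap shows that [s] is not shallow.  So the shallow ones are the [rev_ends n k],
   [0 <= k <= n/2]. *)

Lemma card_set_sum (T : finType) (P : pred T) : #|[set z | P z]| = \sum_z P z.
Proof.
rewrite -sum1_card big_mkcond /=; apply: eq_bigr => z _; rewrite inE; by case: (P z).
Qed.

Lemma card_ord_between n lo hi : #|[set u : 'I_n | lo < u < hi]| = minn n hi - lo.+1.
Proof.
rewrite card_set_sum.
have -> : \sum_(u : 'I_n) (lo < u < hi) = \sum_(0 <= i < n) (lo < i < hi) by rewrite big_mkord.
elim: n => [|n IH]; first by rewrite big_geq //; lia.
by rewrite big_nat_recr //= IH; case: (ltnP lo n) => ?; case: (ltnP n hi) => ? /=; lia.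
Qed.

Lemma bigD2 (T : finType) (F : T -> nat) (x y : T) : x != y ->
  \sum_i F i = F x + F y + \sum_(i | (i != x) && (i != y)) F i.
Proof.
move=> xy; rewrite (bigD1 x) //= (bigD1 y) /=; last by rewrite eq_sym.
by rewrite addnA; congr (_ + _ + _); apply: eq_bigl => i; rewrite andbC.
Qed.

Lemma big2D2 (T : finType) (F : T -> T -> nat) (x y : T) : x != y ->
  \sum_i \sum_j F i j = F x x + F x y + F y x + F y y +
   \sum_(z | (z != x) && (z != y)) (F x z + F y z + (F z x + F z y)) +
   \sum_(i | (i != x) && (i != y)) \sum_(j | (j != x) && (j != y)) F i j.
Proof.
move=> nxy; under eq_bigr => i _ do rewrite (bigD2 (F i) nxy).
rewrite (bigD2 _ nxy) ![in RHS]big_split /= ![in LHS]big_split /=; lia.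
Qed.

Lemma card_porbits_le (T : finType) (s : {perm T}) : #|porbits s| <= #|T|.
Proof. exact: leq_imset_card. Qed.

Lemma card_porbits1 (T : finType) : #|porbits (1 : {perm T})| = #|T|.
Proof.
rewrite card_imset // => x y Exy.
by have := porbit_id 1 x; rewrite Exy => /porbitP [i ->]; rewrite expg1n perm1.
Qed.

Lemma transpositions_tpermM n (s : {perm 'I_n}) (x y : 'I_n) :
  transpositions (tperm x y * s) + (x != y) = transpositions s + (x \notin porbit s y).*2.
Proof.
rewrite /transpositions /ncycles.
have := card_porbits_le s; have := card_porbits_le (tperm x y * s); rewrite card_ord.
set a := #|porbits s|; set b := #|porbits _|.
have : b + (x \notin porbit s y).*2 = a + (x != y) := porbits_mul_tperm s x y.
by rewrite -!muln2; case: (x \notin _); case: (x != y) => /=; lia.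
Qed.

Lemma card_moved_tpermM (T : finType) (s : {perm T}) (j m : T) : s j = m -> s m != m ->
  #|[set i | (tperm j m * s)%g i != i]| < #|[set i | s i != i]|.
Proof.
move=> sj sm; have jm : j != m by apply: contraNneq sm => jm; rewrite -{1}jm sj eqxx.
rewrite (cardsD1 m [set i | s i != i]) inE sm add1n ltnS subset_leq_card //.
apply/subsetP => i; rewrite !inE permM.
case: (eqVneq i m) => [->|im]; first by rewrite tpermR sj eqxx.
case: (eqVneq i j) => [->|ij]; first by rewrite tpermL sj => _; rewrite eq_sym jm.
by rewrite tpermD // eq_sym.
Qed.

Lemma inversionsE n (s : {perm 'I_n}) :
  inversions s = \sum_(i : 'I_n) \sum_(j : 'I_n) ((i < j) && (s j < s i)).
Proof. by rewrite /inversions card_set_sum pair_big; apply: eq_bigr => -[i j]. Qed.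

(* Each [z] strictly between [x] and [y] in both position and value forms two
   inversions with [x] and [y] that the swap removes; all other pairs are traded one for one. *)
Lemma swap_inversion_pairs (x y z a b c : nat) :
  x < y -> b < a -> z != x -> z != y -> c != a -> c != b ->
  ((x < z) && (c < a)) + ((y < z) && (c < b)) + (((z < x) && (a < c)) + ((z < y) && (b < c)))
  = ((x < z) && (c < b)) + ((y < z) && (c < a)) + (((z < x) && (b < c)) + ((z < y) && (a < c)))
    + 2 * ((x < z < y) && (b < c < a)).
Proof.
move=> xy ba; rewrite !neq_ltn.
by case: (ltngtP z x) => //= ? _; case: (ltngtP z y) => //= ? _;
  case: (ltngtP c a) => //= ? _; case: (ltngtP c b) => //= ? _; lia.
Qed.

Lemma inversions_tpermM n (s : {perm 'I_n}) (x y : 'I_n) : x < y -> s y < s x ->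
  inversions s = inversions (tperm x y * s) + 1 +
    2 * #|[set z : 'I_n | (x < z < y) && (s y < s z < s x)]|.
Proof.
move=> xy sxy; have nxy : x != y by rewrite neq_ltn xy.
set t := (tperm x y * s)%g.
have tx : t x = s y by rewrite permM tpermL.
have ty : t y = s x by rewrite permM tpermR.
have tz z : z != x -> z != y -> t z = s z by move=> zx zy; rewrite permM tpermD // eq_sym.
rewrite !inversionsE card_set_sum !(big2D2 _ nxy) (bigD2 _ nxy).
rewrite tx ty !ltnn /= xy sxy ltnNge (ltnW xy) ltnNge (ltnW sxy) /=.
have -> : \sum_(i | (i != x) && (i != y)) \sum_(j | (j != x) && (j != y)) ((i < j) && (t j < t i))
   = \sum_(i | (i != x) && (i != y)) \sum_(j | (j != x) && (j != y)) ((i < j) && (s j < s i)).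
  by apply: eq_bigr => i /andP [ix iy]; apply: eq_bigr => j /andP [jx jy]; rewrite !tz.
have -> : \sum_(z | (z != x) && (z != y))
    ((x < z) && (s z < s x) + (y < z) && (s z < s y) + ((z < x) && (s x < s z) + (z < y) && (s y < s z)))
  = \sum_(z | (z != x) && (z != y))
    ((x < z) && (t z < s y) + (y < z) && (t z < s x) + ((z < x) && (s y < t z) + (z < y) && (s x < t z)))
  + 2 * \sum_(z | (z != x) && (z != y)) ((x < z < y) && (s y < s z < s x)).
  rewrite big_distrr -big_split /=; apply: eq_bigr => z /andP [zx zy].
  rewrite tz //; apply: swap_inversion_pairs => //.
  - by apply: contra zx => /eqP/val_inj/perm_inj ->.
  - by apply: contra zy => /eqP/val_inj/perm_inj ->.
set A := \sum_(i | _) \sum_(j | _) _.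
set B := \sum_(z : 'I_n | _) (_ + _ + _).
set C := \sum_(z : 'I_n | _) [&& _, _ & _].
lia.
Qed.

Definition distn (a b : nat) := maxn a b - minn a b.

Lemma displacement_tpermM n (s : {perm 'I_n}) (x y : 'I_n) : x != y ->
  displacement s + distn (s y) x + distn (s x) y =
  displacement (tperm x y * s) + distn (s x) x + distn (s y) y.
Proof.
move=> nxy; rewrite /displacement /distn !(bigD2 _ nxy) !permM tpermL tpermR.
rewrite [in RHS](eq_bigr (fun i : 'I_n => maxn (s i) i - minn (s i) i)); last first.
  by move=> i /andP[ix iy]; rewrite permM tpermD // eq_sym.
set A := \sum_(i : 'I_n | _) _; lia.
Qed.

Lemma inversions1 n : inversions (1 : {perm 'I_n}) = 0.
Proof. by rewrite inversionsE big1 // => i _; rewrite big1 // => j _; rewrite !perm1; case: ltngtP. Qed.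

Lemma transpositions1 n : transpositions (1 : {perm 'I_n}) = 0.
Proof. by rewrite /transpositions /ncycles card_porbits1 card_ord subnn. Qed.

Lemma displacement1 n : displacement (1 : {perm 'I_n}) = 0.
Proof. by rewrite /displacement big1 // => i _; rewrite perm1 maxnn minnn subnn. Qed.

Lemma inversions_transpositions_tpermM n (s : {perm 'I_n}) (x y : 'I_n) :
  x < y -> s y < s x ->
  inversions (tperm x y * s) + transpositions (tperm x y * s) <= displacement (tperm x y * s) ->
  inversions s + transpositions s + distn (s x) x + distn (s y) y <=
  displacement s + distn (s y) x + distn (s x) y +
    2 * #|[set z : 'I_n | (x < z < y) && (s y < s z < s x)]| + 2.
Proof.
move=> xy sxy.
have nxy : x != y by rewrite neq_ltn xy.
have := inversions_tpermM xy sxy; have := transpositions_tpermM s x y.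
have := displacement_tpermM s nxy; rewrite nxy -!muln2.
by case: (x \notin _) => /=; lia.
Qed.

Theorem diaconis_graham n (s : {perm 'I_n}) :
  inversions s + transpositions s <= displacement s.
Proof.
have [m lt_m] := ubnP #|[set i | s i != i]|; elim: m s lt_m => // m IH s Hs.
case: (pickP (fun i => s i != i)) => [i0 Hi0|Hfix]; last first.
  have -> : s = 1%g by apply/permP => i; rewrite perm1; apply/eqP/negbFE/Hfix.
  by rewrite inversions1 transpositions1.
have [M HM Mmax] := @arg_maxnP _ i0 (fun i => s i != i) (@nat_of_ord n) Hi0.
pose J := (s^-1)%g M.
have sJ : s J = M by rewrite permKV.
have nJM : J != M by apply: contraNneq HM => JM; rewrite -{1}JM sJ eqxx.
have JM : J < M.
  by rewrite ltn_neqAle (inj_eq (@ord_inj n)) nJM; apply: Mmax; rewrite sJ eq_sym.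
have sMM : s M < M.
  by rewrite ltn_neqAle (inj_eq (@ord_inj n)) HM; apply: Mmax; rewrite (inj_eq perm_inj).
have supp_tpermM : #|[set i | (tperm J M * s)%g i != i]| < m.
  by apply: leq_trans (card_moved_tpermM sJ HM) _; rewrite -ltnS.
have sMJ : s M < s J by rewrite sJ.
have := inversions_transpositions_tpermM JM sMJ (IH _ supp_tpermM).
set c := #|_|.
have : c + 1 <= M - maxn J (s M).
  have := ltn_ord M; case: (leqP (s M) J) => ?.
    have : c <= #|[set u : 'I_n | J < u < M]|.
      by apply/subset_leq_card/subsetP => z; rewrite !inE => /andP[/andP[-> ->] _].
    rewrite card_ord_between; lia.
  have : c <= #|[set u : 'I_n | s M < u < M]|.
    rewrite -(card_preimset _ (@perm_inj _ s)); apply/subset_leq_card/subsetP => z.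
    by rewrite !inE sJ => /andP[_ /andP[-> ->]].
  rewrite card_ord_between; lia.
rewrite sJ /distn; lia.
Qed.

Definition rev_ends_fun n k (i : 'I_n) : 'I_n :=
  if (i < k) || (n - k <= i) then rev_ord i else i.

Lemma rev_ends_funK n k : involutive (@rev_ends_fun n k).
Proof.
move=> i; apply: val_inj; have := ltn_ord i; rewrite /rev_ends_fun.
case: (boolP ((i < k) || (n - k <= i))) => H /= Hi; last by rewrite (negbTE H).
by rewrite ifT ?rev_ordK //; case/orP: H => H; apply/orP; [right|left]; lia.
Qed.

Definition rev_ends n k : {perm 'I_n} := perm (can_inj (@rev_ends_funK n k)).

Lemma rev_endsE n k (i : 'I_n) :
  rev_ends n k i = (if (i < k) || (n - k <= i) then n - i.+1 else i) :> nat.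
Proof. by rewrite permE /rev_ends_fun; case: ifP. Qed.

Lemma rev_ends0 n : rev_ends n 0 = 1%g.
Proof.
by apply/permP => i; apply: ord_inj; rewrite rev_endsE perm1 subn0 ltn0 leqNgt ltn_ord.
Qed.

Lemma rev_ends_avoids132 n k : avoids132 (rev_ends n k).
Proof.
apply/existsPn => i; apply/existsPn => j; apply/existsPn => l.
apply/negP => /and4P [? ?]; rewrite !rev_endsE; have := ltn_ord l.
by case: (ltnP i k) => ?; case: (leqP (n - k) i) => ? /=;
  case: (ltnP j k) => ?; case: (leqP (n - k) j) => ? /=;
  case: (ltnP l k) => ?; case: (leqP (n - k) l) => ? /=; lia.
Qed.

Lemma rev_ends_centrosymmetric n k : centrosymmetric (rev_ends n k).
Proof.
apply/forallP => i; apply/eqP/ord_inj; rewrite /= !rev_endsE /=; have := ltn_ord i.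
by case: (ltnP i k) => ?; case: (leqP (n - k) i) => ? /=;
  case: (ltnP (n - i.+1) k) => ?; case: (leqP (n - k) (n - i.+1)) => ? /=; lia.
Qed.

(* Exchanging the entries of [rev_ends n k] at positions [k] and [n - k.+1] gives
   [rev_ends n k.+1]; this adds [2(n - 2k) - 3] to [I], [1] to [T] and
   [2(n - 2k) - 2] to [D]. *)
Lemma rev_ends_shallow n k : k <= n./2 -> shallow (rev_ends n k).
Proof.
elim: k => [|k IH] hk.
  by rewrite rev_ends0 /shallow inversions1 transpositions1 displacement1.
have kn : k < n by lia.
have yn : n - k.+1 < n by lia.
pose x := Ordinal kn; pose y := Ordinal yn.
have xy : x < y by rewrite /=; lia.
have nxy : x != y by rewrite neq_ltn xy.
set r := rev_ends n k.+1.
have rx : r x = y by apply: ord_inj; rewrite rev_endsE /= ifT //; apply/orP; left; lia.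
have ry : r y = x by apply: ord_inj; rewrite rev_endsE /= ifT //; [lia | apply/orP; right; lia].
have r_tpermM : (tperm x y * r)%g = rev_ends n k.
  apply/permP => i; apply: ord_inj; rewrite permM.
  case: (eqVneq i x) => [->|ix]; first by rewrite tpermL ry rev_endsE /=; case: ifP => //; lia.
  case: (eqVneq i y) => [->|iy]; first by rewrite tpermR rx rev_endsE /=; case: ifP => //; lia.
  rewrite tpermD 1?eq_sym // !rev_endsE.
  have : val i != k by apply: contra ix => /eqP H; apply/eqP/val_inj.
  have : val i != n - k.+1 by apply: contra iy => /eqP H; apply/eqP/val_inj.
  have := ltn_ord i.
  by case: (ltnP i k) => ?; case: (leqP (n - k) i) => ? /=;
    case: (ltnP i k.+1) => ?; case: (leqP (n - k.+1) i) => ? /=; lia.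
have between : [set z : 'I_n | (x < z < y) && (r y < r z < r x)] =
               [set z : 'I_n | k < z < n - k.+1].
  apply/setP => z; rewrite !inE rx ry rev_endsE /=; have := ltn_ord z.
  by case: (ltnP z k.+1) => ?; case: (leqP (n - k.+1) z) => ? /=; lia.
have xry : x \in porbit r y by have := mem_porbit r 1 y; rewrite expg1 ry.
have ryx : r y < r x by rewrite rx ry.
have := inversions_tpermM xy ryx; rewrite between card_ord_between.
have := transpositions_tpermM r x y; rewrite xry nxy.
have := displacement_tpermM r nxy; rewrite r_tpermM rx ry /distn /=.
have := IH (ltnW hk); rewrite /shallow => /eqP.
move=> *; apply/eqP; lia.
Qed.

Lemma rev_ends_inj n k1 k2 : k1 <= n./2 -> k2 <= n./2 ->
  rev_ends n k1 = rev_ends n k2 -> k1 = k2.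
Proof.
wlog lt12 : k1 k2 / k1 < k2.
  move=> wlog_lt h1 h2 E; case: (ltngtP k1 k2) => // [lt|lt].
  - exact: wlog_lt.
  - exact/esym/wlog_lt.
move=> _ h2 E; have k1n : k1 < n by lia.
have := congr1 (fun p : {perm 'I_n} => nat_of_ord (p (Ordinal k1n))) E.
by rewrite /= !rev_endsE /= ltnn lt12 (_ : n - k1 <= k1 = false) /=; lia.
Qed.

Lemma avoids132P n (s : {perm 'I_n}) : avoids132 s ->
  forall i j l : 'I_n, i < j -> j < l -> s i < s l -> s l < s j -> False.
Proof.
move=> /existsPn av i j l ij jl sil slj.
by move: (av i) => /existsPn /(_ j) /existsPn /(_ l); rewrite ij jl sil slj.
Qed.

Lemma centrosymmetricP n (s : {perm 'I_n}) :
  centrosymmetric s -> forall i, s (rev_ord i) = rev_ord (s i).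
Proof. by move=> /forallP cs i; apply/eqP. Qed.

(* 213 is the reverse-complement of 132. *)
Lemma centrosymmetric_avoids213 n (s : {perm 'I_n}) : avoids132 s -> centrosymmetric s ->
  forall i j l : 'I_n, i < j -> j < l -> s j < s i -> s i < s l -> False.
Proof.
move=> av cs i j l ij jl sji sil.
apply: (avoids132P av (i := rev_ord l) (j := rev_ord j) (l := rev_ord i));
  rewrite ?centrosymmetricP //=.
- by have := ltn_ord l; lia.
- by have := ltn_ord j; lia.
- by have := ltn_ord (s l); lia.
- by have := ltn_ord (s i); lia.
Qed.

Section Middle.
Variables (n : nat) (s : {perm 'I_n}) (k : nat).
Hypotheses (H2k : 2 * k <= n) (cs : centrosymmetric s).
Hypothesis rev_prefix : forall j : 'I_n, j < k -> s j = n - j.+1 :> nat.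

Lemma rev_outside_middle (j : 'I_n) : (j < k) || (n - k <= j) -> s j = n - j.+1 :> nat.
Proof.
case/orP => jk; first exact: rev_prefix.
have := rev_prefix (j := rev_ord j); rewrite centrosymmetricP //=.
by have := ltn_ord (s j); have := ltn_ord j; lia.
Qed.

Lemma middle_of_image_middle (p : 'I_n) : k <= s p < n - k -> k <= p < n - k.
Proof.
move=> /andP [h1 h2]; have := ltn_ord p.
case: (boolP ((p < k) || (n - k <= p))) => out.
  by have := rev_outside_middle out; case/orP: out; lia.
by move: out; rewrite negb_or -leqNgt -ltnNge => /andP [-> ->].
Qed.

Lemma image_middle (z : 'I_n) : k <= z < n - k -> k <= s z < n - k.
Proof.
move=> zk; case: (boolP ((s z < k) || (n - k <= s z))) => out; last first.
  by move: out; rewrite negb_or -leqNgt -ltnNge => /andP [-> ->].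
have szn := ltn_ord (s z).
have out' : (rev_ord (s z) < k) || (n - k <= rev_ord (s z)).
  by case/orP: out => ?; apply/orP; [right|left]; rewrite /=; lia.
have /perm_inj Ez : s (rev_ord (s z)) = s z.
  by apply: ord_inj; rewrite rev_outside_middle //=; lia.
by move: out'; rewrite Ez => /orP [] /=; lia.
Qed.

End Middle.

Section FirstDefect.
Variables (n : nat) (s : {perm 'I_n}) (k : 'I_n).
Hypotheses (av : avoids132 s) (cs : centrosymmetric s) (H2k : 2 * k < n).
Hypothesis rev_prefix : forall j : 'I_n, j < k -> s j = n - j.+1 :> nat.

(* The first non-fixed point [p] of the middle block satisfies [p < s p], so that
   [k < p < s^-1 p] carries a 132. *)
Lemma middle_fixed : s k = k :> nat -> forall z : 'I_n, k <= z < n - k -> s z = z :> nat.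
Proof.
move=> skk z zmid; apply/eqP/negPn/negP => szz.
pose P (p : 'I_n) := (k <= p < n - k) && (nat_of_ord (s p) != p).
have Pz : P z by rewrite /P zmid szz.
have [p /andP [pmid sp_p] pmin] := @arg_minnP _ z P (@nat_of_ord n) Pz.
have fixed_below (u : 'I_n) : k <= u -> u < p -> s u = u :> nat.
  move=> ku up; apply/eqP/negPn/negP => su.
  have umid : u < n - k by case/andP: pmid => _; lia.
  have /pmin : P u by rewrite /P ku umid su.
  lia.
have kp : k < p.
  rewrite ltn_neqAle; case/andP: pmid => -> _; rewrite andbT.
  by apply: contra sp_p => /eqP/ord_inj <-; rewrite skk.
have p_sp : p < s p.
  rewrite ltnNge; apply/negP => sp_le.
  have sp_lt : s p < p by rewrite ltn_neqAle sp_p sp_le.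
  have ksp : k <= s p by case/andP: (image_middle (ltnW H2k) cs rev_prefix pmid).
  move: (fixed_below (s p) ksp sp_lt) => /ord_inj/perm_inj spp.
  by move: sp_p; rewrite spp eqxx.
pose q := (s^-1)%g p.
have sq : s q = p by rewrite permKV.
have qmid : k <= q < n - k.
  by apply: (middle_of_image_middle (ltnW H2k) cs rev_prefix); rewrite sq.
have p_q : p < q.
  case: (ltngtP p q) => // [qp | /ord_inj pq].
    have := fixed_below q (ltac:(by case/andP: qmid)) qp; rewrite sq; lia.
  by move: sq; rewrite -pq => spp; move: sp_p; rewrite spp eqxx.
by apply: (avoids132P av (i := k) (j := p) (l := q)); rewrite ?sq ?skk.
Qed.

Lemma image_succ_gt (j : 'I_n) : j = k.+1 :> nat -> k < s k < n - k.+1 -> s k < s j.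
Proof.
move=> jk skmid.
have v1n : (s k).+1 < n by lia.
pose p := (s^-1)%g (Ordinal v1n).
have sp : s p = (s k).+1 :> nat by rewrite permKV.
have pmid : k <= p < n - k.
  by apply: (middle_of_image_middle (ltnW H2k) cs rev_prefix); rewrite sp; lia.
rewrite ltnNge; apply/negP => sj_le.
have sj_lt : s j < s k.
  rewrite ltn_neqAle sj_le andbT; apply/negP => /eqP/ord_inj/perm_inj jk'.
  by move: jk; rewrite jk'; lia.
have p_ne_k : p != k :> nat by apply/negP => /eqP/ord_inj pk; move: sp; rewrite pk; lia.
have p_ne_j : p != j :> nat by apply/negP => /eqP/ord_inj pj; move: sp; rewrite pj; lia.
by apply: (centrosymmetric_avoids213 av cs (i := k) (j := j) (l := p)); rewrite ?sp; lia.
Qed.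

(* If [q <= s k], the counted [z] miss [k.+1], whose value exceeds [s k]; otherwise
   their values miss [s q.+1], which lies strictly between [k] and [s k] as [s]
   avoids 213. *)
Lemma between_card_bound (q : 'I_n) : s q = k :> nat -> k.+1 < q -> k < s k < n - k.+1 ->
  #|[set z : 'I_n | (k < z < q) && (s q < s z < s k)]| + 2 <= minn (s k) q - k.
Proof.
move=> sq kq skmid; set c := #|_|.
have k1n : k.+1 < n by lia.
have sk_succ := image_succ_gt (j := Ordinal k1n) erefl skmid.
have := ltn_ord q; case: (leqP q (s k)) => [q_le | sk_lt] qn.
  have : c <= #|[set u : 'I_n | k.+1 < u < q]|.
    apply/subset_leq_card/subsetP => z; rewrite !inE sq => /andP[/andP[kz ->] /andP[_ szk]].
    rewrite andbT ltn_neqAle kz andbT; apply: contraTneq szk => zk1.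
    have -> : z = Ordinal k1n by exact: ord_inj.
    by rewrite -leqNgt ltnW.
  rewrite card_ord_between; lia.
have qmid : k <= q < n - k.
  by apply: (middle_of_image_middle (ltnW H2k) cs rev_prefix); rewrite sq; lia.
have q_ne_rev : q != n - k.+1 :> nat.
  apply/negP => /eqP qrev; have qk : q = rev_ord k by apply: ord_inj; rewrite qrev.
  by move: sq; rewrite qk centrosymmetricP //=; lia.
have q1n : q.+1 < n by lia.
set w := s (Ordinal q1n).
have wmid : k <= w < n - k by apply: (image_middle (ltnW H2k) cs rev_prefix) => /=; lia.
have k_w : k < w.
  rewrite ltn_neqAle; case/andP: wmid => -> _; rewrite andbT.
  apply/negP => /eqP kw; have : s q = w by apply: ord_inj; rewrite sq kw.
  by move/perm_inj/(congr1 (@nat_of_ord n)) => /=; lia.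
have w_sk : w < s k.
  have w_ne : w != s k :> nat.
    apply/negP => /eqP/ord_inj/perm_inj/(congr1 (@nat_of_ord n)) /=; lia.
  rewrite ltn_neqAle w_ne leqNgt /=; apply/negP => sk_w.
  by apply: (centrosymmetric_avoids213 av cs (i := k) (j := q) (l := Ordinal q1n)); rewrite /= ?sq -/w; lia.
have : c <= #|[set u : 'I_n | k < u < s k] :\ w|.
  rewrite -(card_preimset _ (@perm_inj _ s)); apply/subset_leq_card/subsetP => z.
  rewrite !inE sq => /andP[/andP[_ zq] /andP[-> ->]]; rewrite !andbT.
  by apply: contraTneq zq => /perm_inj ->; rewrite /= ltnNge negbK leqnSn.
have := cardsD1 w [set u : 'I_n | k < u < s k]; rewrite inE k_w w_sk card_ord_between /=.
by move: #|_ :\ w| => B; have := ltn_ord (s k); lia.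
Qed.

Lemma first_defect_not_shallow : s k != k :> nat -> s k != n - k.+1 :> nat ->
  inversions s + transpositions s < displacement s.
Proof.
move=> sk_ne_k sk_ne_rev.
have skmid : k < s k < n - k.+1.
  have kmid : k <= k < n - k by rewrite leqnn /=; lia.
  by have := image_middle (ltnW H2k) cs rev_prefix kmid; lia.
pose q := (s^-1)%g k.
have sq : s q = k by rewrite permKV.
have qmid : k <= q < n - k.
  by apply: (middle_of_image_middle (ltnW H2k) cs rev_prefix); rewrite sq; lia.
have kq : k.+1 < q.
  have k1n : k.+1 < n by lia.
  have sk1 := image_succ_gt (j := Ordinal k1n) erefl skmid.
  have q_ne_k : q != k :> nat.
    by apply: contraNneq sk_ne_k => /ord_inj qk; move: sq; rewrite qk => ->.
  have q_ne_k1 : q != k.+1 :> nat.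
    apply/eqP => qk1; have qk : q = Ordinal k1n by apply: ord_inj.
    by move: sk1; rewrite -qk sq; lia.
  by case/andP: qmid; lia.
have k_q : k < q by lia.
have sqk : s q < s k by rewrite sq; lia.
have := inversions_transpositions_tpermM k_q sqk (diaconis_graham _).
have := @between_card_bound q (congr1 (@nat_of_ord n) sq) kq skmid.
rewrite sq /distn => h1 h2; case/andP: skmid => ksk _.
(* [lia] needs the occurrences of [s k] abstracted to see that they coincide. *)
set v := nat_of_ord (s k) in h1 h2 ksk *; lia.
Qed.

End FirstDefect.

Lemma rev_ends_of_middle_fixed n (s : {perm 'I_n}) k : 2 * k <= n -> centrosymmetric s ->
  (forall j : 'I_n, j < k -> s j = n - j.+1 :> nat) ->
  (forall z : 'I_n, k <= z < n - k -> s z = z :> nat) -> s = rev_ends n k.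
Proof.
move=> H2k cs rev_prefix fix_middle; apply/permP => z; apply: ord_inj.
rewrite rev_endsE; case: ifP => out; first exact: (rev_outside_middle H2k cs rev_prefix).
by apply: fix_middle; move: out => /negbT; rewrite negb_or -leqNgt -ltnNge.
Qed.

Lemma avoids132_centrosymmetric_cases n (s : {perm 'I_n}) : avoids132 s -> centrosymmetric s ->
  (exists2 k, k <= n./2 & s = rev_ends n k) \/
  inversions s + transpositions s < displacement s.
Proof.
move=> av cs.
pose bad (i : 'I_n) := (i < n./2) && (s i != n - i.+1 :> nat).
case: (pickP bad) => [i0 bad_i0 | no_bad]; last first.
  left; exists n./2 => //.
  have H2k : 2 * n./2 <= n by lia.
  have rev_prefix (j : 'I_n) : j < n./2 -> s j = n - j.+1 :> nat.
    by move=> jk; apply/eqP; have := no_bad j; rewrite /bad jk => /negbFE.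
  apply: rev_ends_of_middle_fixed => // z zmid.
  by have := image_middle H2k cs rev_prefix zmid; lia.
have [k /andP [kn sk_ne_rev] kmin] := arg_minnP (@nat_of_ord n) bad_i0.
have rev_prefix (j : 'I_n) : j < k -> s j = n - j.+1 :> nat.
  move=> jk; apply/eqP/negPn/negP => sj.
  have /kmin : bad j by rewrite /bad sj andbT; lia.
  lia.
have H2k : 2 * k < n by lia.
case: (eqVneq (nat_of_ord (s k)) (nat_of_ord k)) => [skk | sk_ne_k].
  left; exists k; first exact: ltnW.
  exact: rev_ends_of_middle_fixed (ltnW H2k) cs rev_prefix (middle_fixed av cs H2k rev_prefix skk).
by right; exact: (first_defect_not_shallow av cs H2k rev_prefix sk_ne_k sk_ne_rev).
Qed.

Theorem theorem3p7 (n : nat) (hn : 2 <= n) :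
  #|[set s : {perm 'I_n} | [&& shallow s, avoids132 s & centrosymmetric s]]|
  = (n + 2) %/ 2.
Proof.
have -> : [set s : {perm 'I_n} | [&& shallow s, avoids132 s & centrosymmetric s]]
        = [set rev_ends n k | k : 'I_(n./2).+1].
  apply/setP => s; rewrite inE; apply/and3P/imsetP => [[sh av cs] | [k _ ->]].
    have [[k kn ->] | lt_IT] := avoids132_centrosymmetric_cases av cs.
      by exists (Ordinal (kn : k < (n./2).+1)).
    by move: sh; rewrite /shallow => /eqP; lia.
  split; [apply: rev_ends_shallow | exact: rev_ends_avoids132 | exact: rev_ends_centrosymmetric].
  by rewrite -ltnS.
rewrite card_imset ?card_ord; first lia.
by move=> a b /rev_ends_inj E; apply: ord_inj; apply: E; rewrite -ltnS.
Qed.
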